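(* Let $a,b>0$ with $a+b\leq1$, let $c\geq0$, and let $$B_{a,b}(x)={}_2F_1(a,b;a+b;x)-\frac{a(a+1)b(b+1)}{(a+b)(a+b+1)}\,{}_2F_1(a,b;a+b+2;x)\,\big(c-\log(1-x)\big).$$ Then $\big(-B_{a,b}'\big)^{(n)}(x)>0$ for all $n\geq0$ and all $x\in(0,1)$.
   Context: ${}_2F_1$ is the Gauss hypergeometric function. *)

From Stdlib Require Import Reals Factorial.
From Coquelicot Require Import Coquelicot.
Open Scope R_scope.

Fixpoint poch (q : R) (k : nat) : R :=
  match k with
  | O => 1
  | S k' => poch q k' * (q + INR k')
  end.

Definition hyp2F1 (a b c x : R) : R :=
  PSeries (fun k => poch a k * poch b k / (poch c k * INR (fact k))) x.

Definition Bab (a b c : R) (x : R) : R :=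
  hyp2F1 a b (a + b) x
  - (a * (a + 1) * b * (b + 1)) / ((a + b) * (a + b + 1))
    * hyp2F1 a b (a + b + 2) x * (c - ln (1 - x)).

(* Since -log(1-x) = sum_{n>=1} x^n/n, on (-1,1) the function B_{a,b} is a power
   series sum beta_n x^n whose coefficients grow at most linearly (this is where
   a + b <= 1 is used: the coefficients of both 2F1's then lie in [0,1]).  It is
   enough that beta_n < 0 for n >= 1, since -B' and all its derivatives then have
   positive coefficients.  With f_n, g_n the coefficients of 2F1(a,b;a+b;x) and
   2F1(a,b;a+b+2;x) and K the constant in front,
     beta_n = f_n - K c g_n - K sum_{k<n} g_k / (n-k),
   and 1/(n-k) >= 1/n together with the closed form
     K sum_{k<n} g_k = n f_n (n+a+b+ab) / (n+a+b)
   shows that the last term alone exceeds f_n. *)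

From Stdlib Require Import Reals Factorial Lra Lia Psatz.
From Coquelicot Require Import Coquelicot.
Open Scope R_scope.

Lemma poch_pos (q : R) (n : nat) : 0 < q -> 0 < poch q n.
Proof.
  intros hq; induction n as [|n IH]; simpl; [lra|].
  pose proof (pos_INR n); apply Rmult_lt_0_compat; lra.
Qed.

Lemma poch_shift2 (q : R) (n : nat) :
  poch (q + 2) n * (q * (q + 1)) = poch q n * ((q + INR n) * (q + INR n + 1)).
Proof.
  induction n as [|n IH]; simpl poch; [simpl; ring|].
  rewrite S_INR.
  replace (poch (q + 2) n * (q + 2 + INR n) * (q * (q + 1)))
    with (poch (q + 2) n * (q * (q + 1)) * (q + 2 + INR n)) by ring.
  rewrite IH; ring.
Qed.

Definition hyp2F1_coef (a b q : R) (n : nat) : R :=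
  poch a n * poch b n / (poch q n * INR (fact n)).

Lemma hyp2F1_PSeries (a b q x : R) : hyp2F1 a b q x = PSeries (hyp2F1_coef a b q) x.
Proof. reflexivity. Qed.

Section Coefficients.
Variables a b : R.
Hypotheses (ha : 0 < a) (hb : 0 < b).

Lemma hyp2F1_coef_pos (q : R) (n : nat) : 0 < q -> 0 < hyp2F1_coef a b q n.
Proof.
  intros hq; unfold hyp2F1_coef.
  pose proof (lt_0_INR _ (lt_O_fact n)).
  apply Rdiv_lt_0_compat; apply Rmult_lt_0_compat; auto using poch_pos.
Qed.

Lemma hyp2F1_coef_S (q : R) (n : nat) : 0 < q ->
  hyp2F1_coef a b q (S n) =
  hyp2F1_coef a b q n * ((a + INR n) * (b + INR n)) / ((q + INR n) * INR (S n)).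
Proof.
  intros hq; unfold hyp2F1_coef; simpl poch.
  change (fact (S n)) with (S n * fact n)%nat; rewrite mult_INR.
  pose proof (poch_pos q n hq); pose proof (lt_0_INR _ (lt_O_fact n)).
  pose proof (pos_INR n); rewrite S_INR.
  field; repeat split; lra.
Qed.

Lemma hyp2F1_coef_shift2 (q : R) (n : nat) : 0 < q ->
  hyp2F1_coef a b (q + 2) n =
  hyp2F1_coef a b q n * (q * (q + 1)) / ((q + INR n) * (q + INR n + 1)).
Proof.
  intros hq; unfold hyp2F1_coef.
  pose proof (poch_pos q n hq); pose proof (poch_pos (q + 2) n ltac:(lra)).
  pose proof (lt_0_INR _ (lt_O_fact n)); pose proof (pos_INR n).
  assert (Hq : 0 < (q + INR n) * (q + INR n + 1)) by nra.
  apply (Rmult_eq_reg_r (poch (q + 2) n * ((q + INR n) * (q + INR n + 1)))).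
  2: apply Rgt_not_eq, Rmult_lt_0_compat; lra.
  replace (poch a n * poch b n / (poch q n * INR (fact n)) * (q * (q + 1))
           / ((q + INR n) * (q + INR n + 1))
           * (poch (q + 2) n * ((q + INR n) * (q + INR n + 1))))
    with (poch a n * poch b n * (poch (q + 2) n * (q * (q + 1)))
          / (poch q n * INR (fact n))) by (field; lra).
  rewrite poch_shift2; field; lra.
Qed.

Lemma hyp2F1_coef_shift2_le (q : R) (n : nat) : 0 < q ->
  hyp2F1_coef a b (q + 2) n <= hyp2F1_coef a b q n.
Proof.
  intros hq; rewrite hyp2F1_coef_shift2 by lra.
  pose proof (hyp2F1_coef_pos q n hq); pose proof (pos_INR n).
  assert (Hq : 0 < (q + INR n) * (q + INR n + 1)) by nra.
  apply (Rmult_le_reg_r ((q + INR n) * (q + INR n + 1))); auto.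
  unfold Rdiv; rewrite Rmult_assoc, Rinv_l, Rmult_1_r by lra.
  apply Rmult_le_compat_l; nra.
Qed.

Lemma hyp2F1_coef_le_1 (n : nat) : a + b <= 1 -> hyp2F1_coef a b (a + b) n <= 1.
Proof.
  intros hab; induction n as [|n IH]; [unfold hyp2F1_coef; simpl; lra|].
  rewrite hyp2F1_coef_S by lra.
  pose proof (hyp2F1_coef_pos (a + b) n ltac:(lra)); pose proof (pos_INR n).
  rewrite S_INR.
  assert (Hq : 0 < (a + b + INR n) * (INR n + 1)) by nra.
  apply (Rmult_le_reg_r ((a + b + INR n) * (INR n + 1))); auto.
  unfold Rdiv; rewrite Rmult_assoc, Rinv_l, Rmult_1_r, Rmult_1_l by lra.
  assert ((a + INR n) * (b + INR n) <= (a + b + INR n) * (INR n + 1)) by nra.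
  assert (0 < (a + INR n) * (b + INR n)) by nra.
  nra.
Qed.

End Coefficients.

Definition Bab_factor (a b : R) : R :=
  a * (a + 1) * b * (b + 1) / ((a + b) * (a + b + 1)).

Definition log_coef (n : nat) : R := match n with O => 0 | S _ => / INR n end.

Definition Bab_coef (a b c : R) (n : nat) : R :=
  hyp2F1_coef a b (a + b) n
  - Bab_factor a b * c * hyp2F1_coef a b (a + b + 2) n
  - Bab_factor a b * PS_mult (hyp2F1_coef a b (a + b + 2)) log_coef n.

Lemma log_coef_bounds (n : nat) : 0 <= log_coef n <= 1.
Proof.
  destruct n as [|n]; [simpl; lra|].
  change (log_coef (S n)) with (/ INR (S n)).
  pose proof (pos_INR n); rewrite S_INR.
  split; [left; apply Rinv_0_lt_compat; lra|].
  rewrite <- Rinv_1; apply Rinv_le_contravar; lra.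
Qed.

Lemma PS_mult_log_coef_ge (u : nat -> R) (m : nat) : (forall k, 0 <= u k) ->
  sum_f_R0 u m / INR (S m) <= PS_mult u log_coef (S m).
Proof.
  intros hu; unfold PS_mult; rewrite tech5, Nat.sub_diag; simpl (log_coef 0).
  rewrite Rmult_0_r, Rplus_0_r; unfold Rdiv; rewrite Rmult_comm, scal_sum.
  apply sum_Rle; intros k hk.
  replace (S m - k)%nat with (S (m - k)) by lia.
  apply Rmult_le_compat_l; auto.
  apply Rinv_le_contravar; [apply lt_0_INR; lia | apply le_INR; lia].
Qed.

Lemma PS_mult_log_coef_bounds (u : nat -> R) (n : nat) : (forall k, 0 <= u k <= 1) ->
  0 <= PS_mult u log_coef n <= INR (S n).
Proof.
  intros hu; unfold PS_mult.
  rewrite <- (Rmult_1_l (INR (S n))), <- sum_cte.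
  split; [apply cond_pos_sum | apply sum_Rle]; intros k;
    pose proof (hu k); pose proof (log_coef_bounds (n - k)); nra.
Qed.

Section BabCoefficients.
Variables a b : R.
Hypotheses (ha : 0 < a) (hb : 0 < b).

Lemma Bab_factor_pos : 0 < Bab_factor a b.
Proof. unfold Bab_factor; apply Rdiv_lt_0_compat; nra. Qed.

Lemma Bab_factor_sum (m : nat) :
  Bab_factor a b * sum_f_R0 (hyp2F1_coef a b (a + b + 2)) m =
  INR (S m) * hyp2F1_coef a b (a + b) (S m)
  * (INR (S m) + (a + b) + a * b) / (INR (S m) + (a + b)).
Proof.
  induction m as [|m IH].
  - simpl sum_f_R0; rewrite hyp2F1_coef_S by lra.
    unfold hyp2F1_coef, Bab_factor; simpl; field; lra.
  - rewrite tech5, Rmult_plus_distr_l, IH.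
    rewrite (hyp2F1_coef_shift2 a b (a + b) (S m)), (hyp2F1_coef_S a b (a + b) (S m)) by lra.
    pose proof (pos_INR m); rewrite !S_INR.
    unfold Bab_factor; field; repeat split; nra.
Qed.

Lemma Bab_coef_S_neg (c : R) (m : nat) : 0 <= c -> Bab_coef a b c (S m) < 0.
Proof.
  intros hc; unfold Bab_coef.
  pose proof Bab_factor_pos as hK.
  set (K := Bab_factor a b) in *.
  pose proof (hyp2F1_coef_pos a b ha hb (a + b + 2) (S m) ltac:(lra)) as hg.
  pose proof (hyp2F1_coef_pos a b ha hb (a + b) (S m) ltac:(lra)) as hf.
  pose proof (PS_mult_log_coef_ge (hyp2F1_coef a b (a + b + 2)) m
    (fun k => Rlt_le _ _ (hyp2F1_coef_pos a b ha hb (a + b + 2) k ltac:(lra)))) as hconv.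
  pose proof (Bab_factor_sum m) as hsum; fold K in hsum.
  set (F := hyp2F1_coef a b (a + b) (S m)) in *.
  set (s := sum_f_R0 (hyp2F1_coef a b (a + b + 2)) m) in *.
  set (N := INR (S m)) in *.
  assert (hN : 0 < N) by (apply lt_0_INR; lia).
  assert (hKs : K * s / N <= K * PS_mult (hyp2F1_coef a b (a + b + 2)) log_coef (S m)).
  { unfold Rdiv; rewrite Rmult_assoc; apply Rmult_le_compat_l; lra. }
  assert (hF : K * s / N = F + F * (a * b) / (N + (a + b))).
  { rewrite hsum; field; lra. }
  assert (0 < F * (a * b) / (N + (a + b))).
  { apply Rdiv_lt_0_compat; [apply Rmult_lt_0_compat|]; nra. }
  assert (0 <= K * c * hyp2F1_coef a b (a + b + 2) (S m)).
  { apply Rmult_le_pos; [apply Rmult_le_pos|]; lra. }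
  lra.
Qed.

End BabCoefficients.

Lemma CV_radius_ge_1 (u : nat -> R) (M : R) : 0 < M ->
  (forall n, Rabs (u n) <= M * INR (S n)) -> Rbar_le 1 (CV_radius u).
Proof.
  intros hM hu.
  set (v := PS_scal M (PS_derive (fun _ => 1))).
  apply (Rbar_le_trans _ (CV_radius v)).
  - unfold v; rewrite CV_radius_scal, CV_radius_derive by lra.
    apply CV_radius_bounded; exists 1; intros n.
    rewrite pow1, Rmult_1_l, Rabs_R1; lra.
  - apply is_lub_Rbar_subset with (2 := CV_radius_bounded u) (3 := CV_radius_bounded v).
    intros r [B hB]; exists B; intros n.
    eapply Rle_trans; [|apply (hB n)].
    rewrite !Rabs_mult; apply Rmult_le_compat_r; [apply Rabs_pos|].
    unfold v, PS_scal, PS_derive; change (scal M (INR (S n) * 1)) with (M * (INR (S n) * 1)).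
    rewrite Rmult_1_r, (Rabs_right (M * _)); auto.
    apply Rle_ge, Rmult_le_pos; [lra | apply pos_INR].
Qed.

Lemma CV_radius_ge_1_unit (u : nat -> R) : (forall n, 0 <= u n <= 1) ->
  Rbar_le 1 (CV_radius u).
Proof.
  intros hu; apply (CV_radius_ge_1 u 1); [lra|]; intros n.
  pose proof (hu n); pose proof (pos_INR n); rewrite S_INR, Rabs_right; lra.
Qed.

Lemma unit_disc_lt_CV_radius (u : nat -> R) (t : R) :
  Rbar_le 1 (CV_radius u) -> Rabs t < 1 -> Rbar_lt (Rabs t) (CV_radius u).
Proof. intros hu ht; eapply Rbar_lt_le_trans; [|apply hu]; exact ht. Qed.

Lemma locally_unit_disc (t : R) : Rabs t < 1 -> locally t (fun u => Rabs u < 1).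
Proof.
  intros ht; assert (he : 0 < 1 - Rabs t) by lra.
  exists (mkposreal _ he); intros y hy; change (Rabs (y - t) < 1 - Rabs t) in hy.
  pose proof (Rabs_triang_inv y t); lra.
Qed.

Lemma ln_1m_PSeries (t : R) : Rabs t < 1 -> ln (1 - t) = - PSeries log_coef t.
Proof.
  intros ht.
  assert (hr : Rbar_le 1 (CV_radius log_coef)) by exact (CV_radius_ge_1_unit _ log_coef_bounds).
  set (h := fun u => PSeries log_coef u + ln (1 - u)).
  assert (hd : forall u, Rabs (u - 0) <= Rabs t -> is_derive h u 0).
  { intros u hu; rewrite Rminus_0_r in hu.
    assert (hu1 : Rabs u < 1) by lra.
    assert (0 < 1 - u) by (apply Rabs_lt_between in hu1; lra).
    replace 0 with (PSeries (PS_derive log_coef) u + - / (1 - u)).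
    - apply (is_derive_plus (PSeries log_coef) (fun u => ln (1 - u))).
      + apply is_derive_PSeries, unit_disc_lt_CV_radius; auto.
      + auto_derive; [lra | field; lra].
    - rewrite (PSeries_ext _ (fun _ => 1)).
      2: { intros n; unfold PS_derive; change (log_coef (S n)) with (/ INR (S n)).
           field; apply not_0_INR; lia. }
      unfold PSeries; rewrite (Series_ext _ (fun k => u ^ k)) by (intros k; ring).
      rewrite Series_geom; auto; ring. }
  destruct (MVT_cor4 h (fun _ => 0) 0 (Rabs t) hd t) as [t0 [ht0 _]];
    [rewrite Rminus_0_r; lra|].
  unfold h in ht0; rewrite PSeries_0, Rminus_0_r, ln_1 in ht0; simpl log_coef in ht0.
  lra.
Qed.

Section BabSeries.
Variables a b c : R.
Hypotheses (ha : 0 < a) (hb : 0 < b) (hab : a + b <= 1) (hc : 0 <= c).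

Let f_bounds (n : nat) : 0 <= hyp2F1_coef a b (a + b) n <= 1.
Proof.
  split; [left; apply hyp2F1_coef_pos | apply hyp2F1_coef_le_1]; lra.
Qed.

Let g_bounds (n : nat) : 0 <= hyp2F1_coef a b (a + b + 2) n <= 1.
Proof.
  split; [left; apply hyp2F1_coef_pos; lra|].
  eapply Rle_trans; [apply hyp2F1_coef_shift2_le; lra | apply f_bounds].
Qed.

Lemma CV_radius_Bab_coef : Rbar_le 1 (CV_radius (Bab_coef a b c)).
Proof.
  pose proof (Bab_factor_pos a b ha hb) as hK; set (K := Bab_factor a b) in *.
  apply (CV_radius_ge_1 _ (1 + K * c + K)); [nra|]; intros n; unfold Bab_coef; fold K.
  pose proof (f_bounds n); pose proof (g_bounds n).
  pose proof (PS_mult_log_coef_bounds _ n g_bounds).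
  pose proof (pos_INR n); rewrite S_INR in *.
  set (G := hyp2F1_coef a b (a + b + 2) n) in *.
  set (P := PS_mult (hyp2F1_coef a b (a + b + 2)) log_coef n) in *.
  assert (0 <= K * c) by (apply Rmult_le_pos; lra).
  assert (0 <= K * c * G <= K * c) by (split; nra).
  assert (0 <= K * P <= K * (INR n + 1)) by (split; nra).
  apply Rabs_le; split; nra.
Qed.

Lemma Bab_PSeries (t : R) : Rabs t < 1 -> Bab a b c t = PSeries (Bab_coef a b c) t.
Proof.
  intros ht; unfold Bab; rewrite !hyp2F1_PSeries, ln_1m_PSeries by exact ht.
  fold (Bab_factor a b).
  set (f := hyp2F1_coef a b (a + b)); set (g := hyp2F1_coef a b (a + b + 2)).
  set (K := Bab_factor a b).
  assert (hf : Rbar_lt (Rabs t) (CV_radius f))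
    by exact (unit_disc_lt_CV_radius _ _ (CV_radius_ge_1_unit _ f_bounds) ht).
  assert (hg : Rbar_lt (Rabs t) (CV_radius g))
    by exact (unit_disc_lt_CV_radius _ _ (CV_radius_ge_1_unit _ g_bounds) ht).
  assert (hl : Rbar_lt (Rabs t) (CV_radius log_coef))
    by exact (unit_disc_lt_CV_radius _ _ (CV_radius_ge_1_unit _ log_coef_bounds) ht).
  assert (hKg : ex_pseries (PS_scal (K * c) g) t)
    by (apply ex_pseries_scal; [apply Rmult_comm | apply CV_radius_inside; auto]).
  assert (hKgl : ex_pseries (PS_scal K (PS_mult g log_coef)) t)
    by (apply ex_pseries_scal; [apply Rmult_comm | apply ex_pseries_mult; auto]).
  rewrite (PSeries_ext (Bab_coef a b c)
    (PS_minus (PS_minus f (PS_scal (K * c) g)) (PS_scal K (PS_mult g log_coef)))).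
  2: { intros n; unfold Bab_coef, PS_minus, PS_scal, plus, opp, scal; simpl.
       unfold mult; simpl; fold f g K; ring. }
  rewrite !PSeries_minus, !PSeries_scal, PSeries_mult; auto.
  - ring.
  - apply CV_radius_inside; auto.
  - apply ex_pseries_minus; auto; apply CV_radius_inside; auto.
Qed.

End BabSeries.

Lemma PSeries_pos (u : nat -> R) (x : R) : (forall n, 0 < u n) -> 0 < x ->
  ex_pseries u x -> 0 < PSeries u x.
Proof.
  intros hu hx he; rewrite PSeries_decr_1 by exact he.
  assert (he1 : ex_pseries (PS_decr_1 u) x).
  { apply ex_pseries_decr_1; auto; right; exists (/ x); change (/ x * x = 1); field; lra. }
  assert (0 <= PSeries (PS_decr_1 u) x).
  { rewrite <- (PSeries_const_0 x); apply Series_le.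
    - intros k; unfold PS_decr_1; rewrite Rmult_0_l.
      pose proof (hu (S k)); pose proof (pow_lt x k hx); split; nra.
    - eapply ex_series_ext; [|exact he1]; intros k.
      rewrite pow_n_pow; apply Rmult_comm. }
  pose proof (hu 0%nat); nra.
Qed.

Lemma opp_Derive_PSeries_derive_n_pos (f : R -> R) (u : nat -> R) :
  Rbar_le 1 (CV_radius u) ->
  (forall t, Rabs t < 1 -> f t = PSeries u t) ->
  (forall n, u (S n) < 0) ->
  forall (n : nat) (x : R), 0 < x < 1 ->
    ex_derive_n f (S n) x /\ 0 < Derive_n (fun t => - Derive f t) n x.
Proof.
  intros hr hf hu n x hx.
  assert (hx1 : Rabs x < 1) by (rewrite Rabs_right; lra).
  assert (hloc : forall t, Rabs t < 1 -> locally t (fun s => PSeries u s = f s)).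
  { intros t ht; apply (filter_imp (fun s => Rabs s < 1)); [|apply locally_unit_disc; auto].
    intros s hs; symmetry; auto. }
  set (v := PS_opp (PS_derive u)).
  assert (hv : Rbar_le 1 (CV_radius v)) by (unfold v; rewrite CV_radius_opp, CV_radius_derive; auto).
  split.
  - apply (ex_derive_n_ext_loc (PSeries u)); [apply hloc; auto|].
    apply ex_derive_n_PSeries, unit_disc_lt_CV_radius; auto.
  - rewrite (Derive_n_ext_loc _ (PSeries v)).
    2: { apply (filter_imp (fun s => Rabs s < 1)); [|apply locally_unit_disc; auto].
         intros s hs; unfold v; rewrite PSeries_opp, <- Derive_PSeries
           by (apply unit_disc_lt_CV_radius; auto).
         f_equal; symmetry; apply Derive_ext_loc, hloc; auto. }
    rewrite Derive_n_PSeries by (apply unit_disc_lt_CV_radius; auto).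
    apply PSeries_pos; [| lra |].
    + intros k; unfold PS_derive_n, v, PS_opp, PS_derive; change (opp ?y) with (- y).
      pose proof (hu (k + n)%nat); pose proof (lt_0_INR (S (k + n)) ltac:(lia)).
      apply Rmult_lt_0_compat; [apply Rdiv_lt_0_compat; apply lt_0_INR, lt_O_fact | nra].
    + apply CV_radius_inside; rewrite CV_radius_derive_n.
      apply unit_disc_lt_CV_radius; auto.
Qed.

Theorem lemma9 (a b c : R) (ha : 0 < a) (hb : 0 < b) (hab : a + b <= 1)
  (hc : 0 <= c) :
  forall (n : nat) (x : R), 0 < x < 1 ->
    ex_derive_n (Bab a b c) (S n) x /\
    0 < Derive_n (fun t => - Derive (Bab a b c) t) n x.
Proof.
  apply (opp_Derive_PSeries_derive_n_pos _ (Bab_coef a b c)).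
  - exact (CV_radius_Bab_coef a b c ha hb hab hc).
  - exact (Bab_PSeries a b c ha hb hab).
  - intros n; exact (Bab_coef_S_neg a b ha hb c n hc).
Qed.
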